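(* Fix a cell with energy $E>0$ carried by an initial finite population of particles with positive weights summing to $E$, a source energy $S>0$, and a positive integer $N_{obj}$, and suppose that $\frac{S N_{obj}}{E+S}\in\mathbb{N}$ and that $N^{vol}>1$, where $w_{obj}=(E+S)/N_{obj}$ and $N^{vol}=\max(1,\lfloor S/w_{obj}\rfloor)$. Consider the following iterative procedure on two populations: the $N^{vol}$ volumic (emitted) particles each have weight $S/N^{vol}$ and are never modified; at each iteration $l$, the current non-volumic population of $N^{ini}_l$ particles undergoes Russian Roulette and non-conservative Splitting with target weight $w_{obj}$ (as described in the context, with fresh independent uniform random variables), after which the non-volumic particles are rescaled by a common factor so that the total mass of all particles (volumic and non-volumic) equals $E+S$ (if no non-volumic particle survives, they are replaced by a single particle of weight $E$). Let $N^l=N^{vol}+N^{ini}_l$ be the number of particles at iteration $l$. Then $\lim_{l\to\infty}\mathbb{P}[N^l=N_{obj}]=1$; more precisely, there exists $\lambda>0$ such that $\mathbb{P}(N^l\neq N_{obj})\le e^{-l\lambda}$.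
   Context: Russian Roulette and non-conservative Splitting with target weight $w_{obj}>0$ applied to a population of particles with positive weights: for each particle $p$ of weight $w_p$ draw independently $u_p\sim\mathcal U(0,1)$, set $I_p=\lfloor w_p/w_{obj}\rfloor$, $R_p=w_p/w_{obj}-I_p$. If $I_p=0$, the particle is killed if $R_p<u_p$ and otherwise its weight becomes $w_{obj}$. If $I_p\ge1$, with $N^{split}_p=I_p+\mathbf 1_{\{u_p<R_p\}}$, the particle is replaced by $N^{split}_p$ copies each of weight $w_{obj}$. *)

From HB Require Import structures.
From mathcomp Require Import all_boot all_order all_algebra.
From mathcomp Require Import all_classical all_reals all_analysis.

Set Implicit Arguments.
Unset Strict Implicit.
Unset Printing Implicit Defensive.

Import Order.TTheory GRing.Theory Num.Theory.
Local Open Scope classical_set_scope.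
Local Open Scope ring_scope.

Definition wobj (R : realType) (E S : R) (Nobj : nat) : R := (E + S) / Nobj%:R.

(* N^vol = max(1, floor(S / w_obj)); S / w_obj >= 0 so truncn = floor. *)
Definition Nvol (R : realType) (E S : R) (Nobj : nat) : nat :=
  maxn 1 (Num.truncn (S / wobj E S Nobj)).

(* Number of copies (each of weight w_obj) produced from a particle of
   weight w with uniform draw u by Russian Roulette / non-conservative
   Splitting (I_p = 0: killed iff R_p < u, else one particle of weight w_obj;
   I_p >= 1: I_p + 1_{u < R_p} copies). *)
Definition rr_copies (R : realType) (w_obj w u : R) : nat :=
  let I := Num.truncn (w / w_obj) in
  let Rp := w / w_obj - I%:R in
  if I == 0%N then (if Rp < u then 0%N else 1%N) else addn I (u < Rp)%R.

Definition rr_split (R : realType) (w_obj : R) (ws : seq R) (u : nat -> R)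
  : seq R :=
  flatten [seq nseq (rr_copies w_obj (nth 0 ws p) (u p)) w_obj
          | p <- iota 0 (size ws)].

Definition renormalize (R : realType) (E S : R) (nvol : nat) (ws : seq R)
  : seq R :=
  if ws is [::] then [:: E] else
  let c := (E + S - \sum_(v <- nseq nvol (S / nvol%:R)) v)
           / \sum_(w <- ws) w in
  [seq c * w | w <- ws].

Definition step (R : realType) (E S : R) (Nobj : nat) (ws : seq R)
  (u : nat -> R) : seq R :=
  renormalize E S (Nvol E S Nobj) (rr_split (wobj E S Nobj) ws u).

Fixpoint pop (R : realType) (E S : R) (Nobj : nat) (ws0 : seq R)
  (u : nat -> nat -> R) (l : nat) : seq R :=
  match l with
  | 0%N => ws0
  | l'.+1 => step E S Nobj (pop E S Nobj ws0 u l') (u l')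
  end.

Definition Ntot (R : realType) (T : Type) (E S : R) (Nobj : nat)
  (ws0 : seq R) (U : nat -> nat -> T -> R) (l : nat) (om : T) : nat :=
  (Nvol E S Nobj + size (pop E S Nobj ws0 (fun k p => U k p om) l))%N.

Definition uniform01 (R : realType) (d : measure_display) (T : measurableType d)
  (P : probability T R) (X : T -> R) : Prop :=
  forall B : set R, measurable B ->
    P (X @^-1` B) = lebesgue_measure (B `&` [set x : R | 0 < x < 1]).

Definition mutually_independent (R : realType) (d : measure_display)
  (T : measurableType d) (P : probability T R) (I : eqType)
  (X : I -> T -> R) : Prop :=
  forall (s : seq I) (B : I -> set R), uniq s ->
    (forall i, i \in s -> measurable (B i)) ->
    P (\bigcap_(i in [set i | i \in s]) (X i @^-1` B i)) =
    \big[*%E/1%E]_(i <- s) P (X i @^-1` B i).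

From HB Require Import structures.
From mathcomp Require Import all_boot all_order all_algebra.
From mathcomp Require Import all_classical all_reals all_analysis.
From mathcomp Require Import measurable_realfun ring lra zify.

Set Implicit Arguments.
Unset Strict Implicit.
Unset Printing Implicit Defensive.

Import Order.TTheory GRing.Theory Num.Theory numFieldNormedType.Exports.
Local Open Scope classical_set_scope.
Local Open Scope ring_scope.

(* After one iteration a population always consists of n particles of equal
   weight E/n, so from then on the process is a chain on the integer n.  With
   m := E / w_obj = Nobj - N^vol each of these particles has weight ratio m/n,
   and n = m is absorbing: a particle of ratio 1 is copied exactly once by any
   nonnegative draw.  The state m is reached with positive probability at the
   first iteration (round up exactly the right particles of the initial
   population) and, from any population of size at most K = 2m + |ws0|, within
   two iterations in which the draws of the first m particles are small and the
   others large, which has probability (1/K)^(2K).  These events involve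
   disjoint sets of independent draws, so the probability of not having reached
   m after l iterations decays geometrically in l. *)

Lemma exists_submask_count (a : bitseq) J : (J <= count id a)%N ->
  exists c : bitseq, [/\ size c = size a,
    forall i, nth false c i -> nth false a i & count id c = J].
Proof.
elim: a J => [|b a IH] J /=; first by rewrite leqn0 => /eqP ->; exists [::].
case: b => /= [|/IH [c [c_size c_sub c_count]]]; last first.
  by exists (false :: c); split => /=; [rewrite c_size | case=> [|i] // /c_sub |].
case: J => [_|J /IH [c [c_size c_sub c_count]]].
  by exists (nseq (size a).+1 false); rewrite size_nseq count_nseq mul0n;
    split => // i; rewrite nth_nseq if_same.
by exists (true :: c); split => /=; [rewrite c_size | case=> [|i] // /c_sub | rewrite c_count].
Qed.

Section rounding.
Variable R : realType.
Implicit Types (r u w w_obj : R) (j n : nat).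

Definition frac r : R := r - (Num.truncn r)%:R.

Definition rounds_up r u : bool :=
  if Num.truncn r == 0%N then u <= frac r else u < frac r.

Lemma frac_ge0 r : 0 <= r -> 0 <= frac r.
Proof. by move=> r0; rewrite subr_ge0 truncn_le. Qed.

Lemma frac_lt1 r : 0 <= r -> frac r < 1.
Proof. by move=> r0; rewrite ltrBlDl natr1 truncnS_gt. Qed.

Lemma rr_copiesE w_obj w u :
  rr_copies w_obj w u = (Num.truncn (w / w_obj) + rounds_up (w / w_obj) u)%N.
Proof. by rewrite /rr_copies /rounds_up /frac leNgt; case: eqP => [->|//]; case: ifP. Qed.

Lemma rr_copies_le w_obj w u : (rr_copies w_obj w u <= Num.truncn (w / w_obj) + 1)%N.
Proof. by rewrite rr_copiesE leq_add2l leq_b1. Qed.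

Lemma rr_copies_ratio1 w_obj w u : w / w_obj = 1 -> 0 <= u -> rr_copies w_obj w u = 1%N.
Proof. by move=> r1 u0; rewrite rr_copiesE r1 /rounds_up /frac truncn1 subrr ltNge u0. Qed.

Section grid.
Variables (j n : nat).
Hypothesis n_gt0 : (0 < n)%N.

Lemma frac_grid : 0 < frac (j%:R / n%:R) -> n%:R^-1 <= frac (j%:R / n%:R).
Proof.
move=> frac_gt0; set t := Num.truncn (j%:R / n%:R : R).
have n0 : 0 < n%:R :> R by rewrite ltr0n.
have nfrac : n%:R * frac (j%:R / n%:R) = j%:R - (n * t)%:R.
  by rewrite /frac -/t natrM; field; rewrite gt_eqF.
have : (n * t < j)%N by rewrite -(ltr_nat R) -subr_gt0 -nfrac mulr_gt0.
rewrite -(ler_nat R) -natr1 => lt_nt_j.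
by rewrite -(ler_pM2l n0) mulfV ?gt_eqF // nfrac; lra.
Qed.

Lemma truncn_grid_eq0 : (j < n)%N -> Num.truncn (j%:R / n%:R : R) = 0%N.
Proof.
move=> lt_jn; apply/truncn0Pn; rewrite -ltNge ltr_pdivrMr ?ltr0n // mul1r.
by rewrite ltr_nat.
Qed.

Variables (w_obj w u : R).
Hypothesis ratio_grid : w / w_obj = j%:R / n%:R.

Lemma rr_copies_ge_ratio : u < n%:R^-1 -> j%:R / n%:R <= (rr_copies w_obj w u)%:R :> R.
Proof.
move=> u_small; rewrite rr_copiesE ratio_grid; set r := j%:R / n%:R.
have r0 : 0 <= r by rewrite divr_ge0.
have [frac0|frac_gt0] := eqVneq (frac r) 0.
  by rewrite natrD -[r in r <= _](subrK (Num.truncn r)%:R) -/(frac r) frac0 add0r lerDl.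
have frac_pos : 0 < frac r by rewrite lt0r frac_gt0 frac_ge0.
have u_lt : u < frac r := lt_le_trans u_small (frac_grid frac_pos).
have -> : rounds_up r u by rewrite /rounds_up ltW // u_lt; case: eqP.
by rewrite addn1 ltW // truncnS_gt.
Qed.

Section below_one.
Hypothesis lt_jn : (j < n)%N.

Lemma rr_copies_eq1 : (0 < j)%N -> u < n%:R^-1 -> rr_copies w_obj w u = 1%N.
Proof.
move=> j_gt0 u_small; rewrite rr_copiesE ratio_grid truncn_grid_eq0 //.
rewrite /rounds_up /frac truncn_grid_eq0 //= subr0 (le_trans (ltW u_small)) //.
by rewrite ler_pdivlMr ?ltr0n // mulVf ?pnatr_eq0 -?lt0n // ler1n.
Qed.

Lemma rr_copies_eq0 : 1 - n%:R^-1 < u -> rr_copies w_obj w u = 0%N.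
Proof.
move=> u_large; rewrite rr_copiesE ratio_grid truncn_grid_eq0 //.
have n0 : 0 < n%:R :> R by rewrite ltr0n.
have r_small : j%:R / n%:R <= 1 - n%:R^-1 :> R.
  rewrite ler_pdivrMr // mulrBl mul1r mulVf ?gt_eqF //.
  by move: lt_jn; rewrite -(ler_nat R) -natr1 => h; lra.
by rewrite /rounds_up /frac truncn_grid_eq0 //= subr0 leNgt (le_lt_trans r_small u_large).
Qed.

End below_one.
End grid.
End rounding.

Section dynamics.
Variable R : realType.
Implicit Types (E S w w_obj : R) (ws : seq R) (u : nat -> R).

Definition rr_count w_obj ws u : nat :=
  \sum_(p <- iota 0 (size ws)) rr_copies w_obj (nth 0%R ws p) (u p).

Definition uniform_pop E n : seq R := nseq n (E / n%:R).

Lemma size_uniform_pop E n : size (uniform_pop E n) = n.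
Proof. exact: size_nseq. Qed.

Lemma flatten_nseq (T I : Type) (x : T) (s : seq I) (f : I -> nat) :
  flatten [seq nseq (f i) x | i <- s] = nseq (\sum_(i <- s) f i) x.
Proof. by elim: s => [|i s IH]; rewrite ?big_nil ?big_cons //= IH nseqD. Qed.

Lemma rr_split_nseq w_obj ws u :
  rr_split w_obj ws u = nseq (rr_count w_obj ws u) w_obj.
Proof. exact: flatten_nseq. Qed.

Lemma renormalize_nseq E S nvol M w : (0 < nvol)%N -> w != 0 ->
  renormalize E S nvol (nseq M w) = uniform_pop E (maxn 1 M).
Proof.
move=> nvol_gt0 w_neq0; case: M => [|M]; first by rewrite /uniform_pop /= divr1.
have sumS : \sum_(v <- nseq nvol (S / nvol%:R)) v = S.
  by rewrite big_nseq iter_addr_0 -[_ *+ nvol]mulr_natr divfK // pnatr_eq0 -lt0n.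
have sumw : \sum_(v <- nseq M.+1 w) v = w *+ M.+1 by rewrite big_nseq iter_addr_0.
rewrite /uniform_pop (maxn_idPr _) // /renormalize /=.
rewrite (_ : w :: nseq M w = nseq M.+1 w) // sumS sumw map_nseq addrK.
rewrite -[w *+ _]mulr_natr (_ : E / (w * M.+1%:R) * w = E / M.+1%:R) //.
by field; rewrite w_neq0 andbT addrC natr1 pnatr_eq0.
Qed.

Lemma pop_succ E S Nobj ws0 (u : nat -> nat -> R) l : wobj E S Nobj != 0 ->
  pop E S Nobj ws0 u l.+1 =
    uniform_pop E (maxn 1 (rr_count (wobj E S Nobj) (pop E S Nobj ws0 u l) (u l))).
Proof.
by move=> wobj_neq0; rewrite /= /step rr_split_nseq renormalize_nseq // /Nvol leq_max.
Qed.

Lemma rr_count_rounding w_obj ws (c : bitseq) u :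
  size c = size ws ->
  (forall i, (i < size ws)%N -> if nth false c i
     then u i < frac (nth 0%R ws i / w_obj) else frac (nth 0%R ws i / w_obj) < u i) ->
  rr_count w_obj ws u =
    (\sum_(i <- iota 0 (size ws)) Num.truncn (nth 0%R ws i / w_obj) + count id c)%N.
Proof.
move=> c_size u_sep; rewrite /rr_count.
rewrite (eq_big_seq (fun i => Num.truncn (nth 0%R ws i / w_obj) + nth false c i)%N).
  by rewrite big_split /= -c_size -sumn_count sumnE big_map (big_nth false) /index_iota subn0.
move=> i; rewrite mem_iota => /andP[_ lt_i]; rewrite rr_copiesE /rounds_up.
have := u_sep i lt_i; case: (nth false c i) => sep; congr addn.
  by case: eqP => _; rewrite ?(ltW sep) ?sep.
by case: eqP => _; [rewrite leNgt sep | rewrite ltNge (ltW sep)].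
Qed.

End dynamics.

Section counting.
Variables (R : realType) (E w_obj : R) (m : nat).
Hypothesis w_obj_gt0 : 0 < w_obj.
Hypothesis m_gt0 : (0 < m)%N.
Hypothesis E_ratio : E / w_obj = m%:R.
Implicit Types (ws : seq R) (u : nat -> R) (n K : nat).

Lemma uniform_ratio n : E / n%:R / w_obj = m%:R / n%:R.
Proof. by rewrite mulrAC E_ratio. Qed.

Lemma rr_count_uniform n u : rr_count w_obj (uniform_pop E n) u =
  (\sum_(p <- iota 0 n) rr_copies w_obj (E / n%:R) (u p))%N.
Proof.
rewrite /rr_count /uniform_pop size_nseq; apply: eq_big_seq => p.
by rewrite mem_iota => /andP[_ lt_pn]; rewrite nth_nseq lt_pn.
Qed.

Lemma ratio_ge0 ws i : all (fun w => 0 <= w) ws -> 0 <= nth 0%R ws i / w_obj.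
Proof.
move=> ws_ge0; apply: divr_ge0; last exact: ltW.
have [lt_i|ge_i] := ltnP i (size ws); last by rewrite nth_default.
exact: (allP ws_ge0) _ (mem_nth 0%R lt_i).
Qed.

Lemma sum_ratios ws : \sum_(w <- ws) w = E ->
  \sum_(i <- iota 0 (size ws)) nth 0%R ws i / w_obj = m%:R.
Proof.
move=> ws_sum; rewrite -mulr_suml -E_ratio -ws_sum [in RHS](big_nth 0%R).
by rewrite /index_iota subn0.
Qed.

Section initial_population.
Variable ws : seq R.
Hypothesis ws_ge0 : all (fun w => 0 <= w) ws.
Hypothesis ws_sum : \sum_(w <- ws) w = E.

Lemma sum_truncn_le :
  (\sum_(i <- iota 0 (size ws)) Num.truncn (nth 0%R ws i / w_obj) <= m)%N.
Proof.
rewrite -(ler_nat R) natr_sum -(sum_ratios ws_sum); apply: ler_sum => i _.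
by rewrite truncn_le ratio_ge0.
Qed.

Lemma rr_count_le u : (rr_count w_obj ws u <= m + size ws)%N.
Proof.
rewrite /rr_count (leq_trans (leq_sum _ (fun p _ => rr_copies_le _ _ (u p)))) //.
by rewrite big_split /= sum1_size size_iota leq_add2r sum_truncn_le.
Qed.

Lemma exists_rounding : exists c : bitseq, [/\ size c = size ws,
  forall i, nth false c i -> 0 < frac (nth 0%R ws i / w_obj) &
  (\sum_(i <- iota 0 (size ws)) Num.truncn (nth 0%R ws i / w_obj) + count id c = m)%N].
Proof.
set T := (\sum_(i <- _) _)%N; have T_le : (T <= m)%N := sum_truncn_le.
set a := [seq 0 < frac (nth 0%R ws i / w_obj) | i <- iota 0 (size ws)].
have : (m - T <= count id a)%N.
  rewrite -(ler_nat R) natrB // natr_sum -(sum_ratios ws_sum) -sumrB.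
  rewrite count_map -sumn_count sumnE big_map natr_sum; apply: ler_sum => i _.
  have r_ge0 := ratio_ge0 i ws_ge0; rewrite -/(frac (nth 0%R ws i / w_obj)) /=.
  by case: (boolP (0 < frac _)) => [_|]; [exact/ltW/frac_lt1 | rewrite -leNgt].
move=> /exists_submask_count [c [c_size c_sub c_count]].
exists c; split; first by rewrite c_size size_map size_iota.
  move=> i /c_sub; have [lt_i|ge_i] := ltnP i (size ws).
    by rewrite (nth_map 0%N) ?size_iota // nth_iota.
  by rewrite nth_default // size_map size_iota.
by rewrite c_count subnKC.
Qed.

End initial_population.

Lemma rr_count_uniform_stable u : (forall p, (p < m)%N -> 0 <= u p) ->
  rr_count w_obj (uniform_pop E m) u = m.
Proof.
move=> u_ge0; rewrite rr_count_uniform (eq_big_seq (fun => 1%N)) ?sum1_size ?size_iota //.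
move=> p; rewrite mem_iota => /andP[_ lt_pm]; apply: rr_copies_ratio1; last exact: u_ge0.
by rewrite uniform_ratio divff // pnatr_eq0 -lt0n.
Qed.

Lemma rr_count_uniform_le n u : (m < n)%N -> (rr_count w_obj (uniform_pop E n) u <= n)%N.
Proof.
move=> lt_mn; rewrite rr_count_uniform -[X in (_ <= X)%N](size_iota 0 n) -sum1_size.
apply: leq_sum => p _; apply: (leq_trans (rr_copies_le _ _ _)).
by rewrite uniform_ratio (truncn_grid_eq0 R (leq_ltn_trans (leq0n m) lt_mn) lt_mn).
Qed.

Lemma rr_count_uniform_ge n K u : (0 < n)%N -> (n <= K)%N ->
  (forall p, (p < n)%N -> u p < K%:R^-1) -> (m <= rr_count w_obj (uniform_pop E n) u)%N.
Proof.
move=> n_gt0 le_nK u_small; have n0 : 0 < n%:R :> R by rewrite ltr0n.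
have le_Kn : K%:R^-1 <= n%:R^-1 :> R.
  by rewrite lef_pV2 ?posrE ?ltr0n ?(leq_trans n_gt0) // ler_nat.
rewrite -(ler_nat R) rr_count_uniform natr_sum.
have -> : m%:R = \sum_(p <- iota 0 n) (m%:R / n%:R) :> R.
  by rewrite big_const_seq count_predT iter_addr_0 size_iota -[_ *+ n]mulr_natr divfK ?gt_eqF.
rewrite !big_seq; apply: ler_sum => p; rewrite mem_iota => /andP[_ lt_pn].
apply: rr_copies_ge_ratio => //; first exact: uniform_ratio.
exact: lt_le_trans (u_small p lt_pn) le_Kn.
Qed.

Lemma rr_count_uniform_eq n K u : (m <= n)%N -> (n <= K)%N ->
  (forall p, (p < m)%N -> 0 <= u p < K%:R^-1) ->
  (forall p, (m <= p < K)%N -> 1 - K%:R^-1 < u p) ->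
  rr_count w_obj (uniform_pop E n) u = m.
Proof.
move=> le_mn le_nK u_small u_large.
have [eq_nm|neq_nm] := eqVneq n m.
  by rewrite eq_nm; apply: rr_count_uniform_stable => p /u_small /andP[].
have lt_mn : (m < n)%N by rewrite ltn_neqAle eq_sym neq_nm.
have n_gt0 : (0 < n)%N := leq_ltn_trans (leq0n m) lt_mn.
have le_Kn : K%:R^-1 <= n%:R^-1 :> R.
  by rewrite lef_pV2 ?posrE ?ltr0n ?(leq_trans n_gt0) // ler_nat.
have iota_split : iota 0 n = iota 0 m ++ iota m (n - m) by rewrite -iotaD subnKC.
rewrite rr_count_uniform iota_split big_cat /=.
rewrite (eq_big_seq (fun => 1%N)) ?sum1_size ?size_iota; last first.
  move=> p; rewrite mem_iota => /andP[_ lt_pm]; have /andP[_ u_lt] := u_small p lt_pm.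
  exact: (rr_copies_eq1 n_gt0 (uniform_ratio n) lt_mn m_gt0 (lt_le_trans u_lt le_Kn)).
rewrite big1_seq ?addn0 // => p /andP[_]; rewrite mem_iota subnKC // => /andP[le_mp lt_pn].
apply: (rr_copies_eq0 (u := u p) n_gt0 (uniform_ratio n) lt_mn).
apply: le_lt_trans (u_large p _); first by rewrite lerB.
by rewrite le_mp (leq_trans lt_pn).
Qed.

End counting.

Section nat_valued_measurable.
Context d (T : measurableType d).

Lemma measurable_fun_natcase d' (T' : measurableType d') (X : T -> nat)
    (G : nat -> T -> T') :
  measurable_fun setT X -> (forall n, measurable_fun setT (G n)) ->
  measurable_fun setT (fun om => G (X om) om).
Proof.
move=> mX mG _ Y mY; rewrite setTI.
have -> : (fun om => G (X om) om) @^-1` Y = \bigcup_n (X @^-1` [set n] `&` G n @^-1` Y).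
  by apply/seteqP; split => [om Yom|om [n _ [/= <-]]] //; exists (X om).
apply: bigcupT_measurable => n; apply: measurableI.
  by rewrite -[X @^-1` _]setTI; apply: mX.
by rewrite -[G n @^-1` _]setTI; apply: mG.
Qed.

Lemma measurable_fun_sumn (I : Type) (s : seq I) (F : I -> T -> nat) :
  (forall i, measurable_fun setT (F i)) ->
  measurable_fun setT (fun om => \sum_(i <- s) F i om)%N.
Proof.
move=> mF; elim: s => [|i s IH].
  by under eq_fun do rewrite big_nil; exact: measurable_cst.
by under eq_fun do rewrite big_cons; exact: measurable_fun_addn.
Qed.

End nat_valued_measurable.

Lemma measurable_rr_copies (R : realType) (w_obj w : R) :
  measurable_fun setT (rr_copies w_obj w).
Proof.
have -> : rr_copies w_obj w = fun u => (Num.truncn (w / w_obj) + rounds_up (w / w_obj) u)%N.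
  by apply/funext => u; rewrite rr_copiesE.
apply: measurable_fun_addn; first exact: measurable_cst.
apply: (@measurableT_comp _ _ _ _ _ _ nat_of_bool) => //.
by rewrite /rounds_up; case: eqP => _; [apply: measurable_fun_ler | apply: measurable_fun_ltr].
Qed.

Section measurable_population.
Context (R : realType) d (T : measurableType d) (U : nat -> nat -> T -> R).
Variables (E S : R) (Nobj : nat) (ws0 : seq R).
Hypothesis mU : forall l p, measurable_fun setT (U l p).
Hypothesis wobj_neq0 : wobj E S Nobj != 0.
Local Notation w_obj := (wobj E S Nobj).
Local Notation popU om := (pop E S Nobj ws0 (fun l p => U l p om)).

Lemma measurable_rr_count ws l :
  measurable_fun setT (fun om => rr_count w_obj ws (U l ^~ om)).
Proof.
apply: measurable_fun_sumn => p.
exact: measurableT_comp (measurable_rr_copies _ _) (mU l p).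
Qed.

Lemma measurable_size_pop l : measurable_fun setT (fun om => size (popU om l)).
Proof.
elim: l => [|l IH]; first exact: measurable_cst.
have size_next om : size (popU om l.+1) =
    maxn 1 (rr_count w_obj (popU om l) (U l ^~ om)).
  by rewrite pop_succ // size_uniform_pop.
under eq_fun do rewrite size_next.
case: l IH size_next => [_ _|l IH _].
  exact: measurable_fun_maxn (measurable_cst _) (measurable_rr_count _ _).
have pop_uniform om : popU om l.+1 = uniform_pop E (size (popU om l.+1)).
  by rewrite pop_succ // size_uniform_pop.
under eq_fun do rewrite pop_uniform.
apply: (measurable_fun_natcase
  (G := fun n om => maxn 1 (rr_count w_obj (uniform_pop E n) (U l.+1 ^~ om))) IH) => n.
exact: measurable_fun_maxn (measurable_cst _) (measurable_rr_count _ _).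
Qed.

Lemma measurable_Ntot_eq l : measurable [set om | Ntot E S Nobj ws0 U l om = Nobj].
Proof.
have mN : measurable_fun setT (Ntot E S Nobj ws0 U l).
  exact: measurable_fun_addn (measurable_cst _) (measurable_size_pop l).
by rewrite -[X in measurable X]setTI; apply: (mN measurableT [set Nobj]).
Qed.

End measurable_population.

Section independent_boxes.
Context (R : realType) d (T : measurableType d) (P : probability T R).
Variables (I : eqType) (X : I -> T -> R) (B : I -> set R).
Hypothesis mX : forall i, measurable_fun setT (X i).
Hypothesis mB : forall i, measurable (B i).
Hypothesis X_indep : mutually_independent P X.

Definition box (s : seq I) : set T := \bigcap_(i in [set i | i \in s]) X i @^-1` B i.

Definition avoid (ts : seq (seq I)) : set T :=
  \bigcap_(t in [set t | t \in ts]) ~` box t.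

Lemma box_nil : box [::] = setT.
Proof. by apply/seteqP; split. Qed.

Lemma box_cons i s : box (i :: s) = X i @^-1` B i `&` box s.
Proof.
apply/seteqP; split => [om is_om|om [Bi s_om] j]; first split.
- by apply: is_om; rewrite /= mem_head.
- by move=> j sj; apply: is_om; rewrite /= in_cons sj orbT.
- by rewrite /= in_cons => /orP[/eqP ->|/s_om].
Qed.

Lemma measurable_box s : measurable (box s).
Proof.
elim: s => [|i s IH]; first by rewrite box_nil.
by rewrite box_cons; apply: measurableI => //; rewrite -[_ @^-1` _]setTI; apply: mX.
Qed.

Lemma box_cat s t : box (s ++ t) = box s `&` box t.
Proof.
elim: s => [|i s IH]; first by rewrite box_nil setTI.
by rewrite cat_cons !box_cons IH setIA.
Qed.

Lemma probability_box s : uniq s ->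
  P (box s) = \big[*%E/1%E]_(i <- s) P (X i @^-1` B i).
Proof. by move=> s_uniq; apply: X_indep. Qed.

Lemma fine_probability_box s : uniq s ->
  fine (P (box s)) = \prod_(i <- s) fine (P (X i @^-1` B i)).
Proof.
have mXB i : measurable (X i @^-1` B i) by rewrite -[_ @^-1` _]setTI; apply: mX.
elim: s => [_|i s IH /[dup] is_uniq /andP[_ s_uniq]].
  by rewrite box_nil probability_setT big_nil.
rewrite probability_box // !big_cons -(probability_box s_uniq) fineM ?IH //.
  exact: fin_num_measure.
by rewrite fin_num_measure //; apply: measurable_box.
Qed.

Lemma fine_probability_box_cat s t : uniq (s ++ t) ->
  fine (P (box (s ++ t))) = fine (P (box s)) * fine (P (box t)).
Proof.
move=> st_uniq; have := st_uniq; rewrite cat_uniq => /and3P[s_uniq _ t_uniq].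
by rewrite !fine_probability_box // big_cat.
Qed.

Lemma avoid_nil : avoid [::] = setT.
Proof. by apply/seteqP; split. Qed.

Lemma avoid_cons t ts : avoid (t :: ts) = ~` box t `&` avoid ts.
Proof.
apply/seteqP; split => [om tts_om|om [t_om ts_om] r]; first split.
- by apply: tts_om; rewrite /= mem_head.
- by move=> r tsr; apply: tts_om; rewrite /= in_cons tsr orbT.
- by rewrite /= in_cons => /orP[/eqP ->|/ts_om].
Qed.

Lemma measurable_avoid ts : measurable (avoid ts).
Proof.
elim: ts => [|t ts IH]; first by rewrite avoid_nil.
by rewrite avoid_cons; apply: measurableI => //; apply/measurableC/measurable_box.
Qed.

Lemma fine_probability_box_avoid s ts : uniq (s ++ flatten ts) ->
  fine (P (box s `&` avoid ts)) =
  fine (P (box s)) * \prod_(t <- ts) (1 - fine (P (box t))).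
Proof.
elim: ts s => [|t ts IH] s; first by rewrite avoid_nil setIT big_nil mulr1.
rewrite /= catA => sts_uniq.
have st_uniq : uniq (s ++ t) by move: sts_uniq; rewrite cat_uniq => /andP[].
have sts'_uniq : uniq (s ++ flatten ts).
  by move: sts_uniq; rewrite -catA uniq_catCA cat_uniq => /and3P[].
have mA : measurable (box s `&` avoid ts).
  by apply: measurableI; [apply: measurable_box | apply: measurable_avoid].
have -> : box s `&` avoid (t :: ts) = (box s `&` avoid ts) `\` box t.
  by rewrite avoid_cons; apply/seteqP; split => om /=; tauto.
have mt := measurable_box t.
rewrite measureD ?(le_lt_trans (probability_le1 P mA)) ?ltry //.
have -> : (box s `&` avoid ts) `&` box t = box (s ++ t) `&` avoid ts.
  by rewrite box_cat; apply/seteqP; split => om /=; tauto.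
have mB' : measurable (box (s ++ t) `&` avoid ts).
  by apply: measurableI; [apply: measurable_box | apply: measurable_avoid].
rewrite fineB ?fin_num_measure //.
by rewrite IH // IH // fine_probability_box_cat // big_cons; ring.
Qed.

End independent_boxes.

Section uniform_draw.
Context (R : realType) d (T : measurableType d) (P : probability T R) (Y : T -> R).
Hypothesis Y_unif : uniform01 P Y.

Lemma uniform01_itv (a b : R) : 0 <= a -> a < b -> b <= 1 ->
  P (Y @^-1` `]a, b[%classic) = (b - a)%:E.
Proof.
move=> a_ge0 lt_ab b_le1; rewrite Y_unif; last exact: measurable_itv.
have -> : `]a, b[%classic `&` [set x : R | 0 < x < 1] = `]a, b[%classic.
  apply/seteqP; split => x /=; first by case.
  rewrite in_itv /= => /andP[ax xb]; split; first by rewrite ax xb.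
  by rewrite (le_lt_trans a_ge0 ax) (lt_le_trans xb b_le1).
by rewrite lebesgue_measure_itv /= lte_fin lt_ab.
Qed.

Lemma uniform01_lt0 : P [set om | Y om < 0] = 0%E.
Proof.
rewrite (_ : [set om | Y om < 0] = Y @^-1` `]-oo, 0[%classic); last first.
  by apply/seteqP; split => om /=; rewrite in_itv.
rewrite Y_unif; last exact: measurable_itv.
rewrite (_ : _ `&` _ = set0) ?measure0 //; apply/seteqP; split => x //=.
by rewrite in_itv /= => -[x_lt0 /andP[x_gt0 _]]; move: (lt_trans x_gt0 x_lt0); rewrite ltxx.
Qed.

End uniform_draw.

Lemma geometric_le_expR (R : realType) (th : R) (f l : nat) :
  0 < th -> th <= 1 -> (l <= f.+1.*2)%N ->
  th ^+ f.+1 <= expR (- (l%:R * (- ln th / 2))).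
Proof.
move=> th_gt0 th_le1 le_l; rewrite -[th in th ^+ _]lnK ?posrE // -expRM_natl ler_expR.
have ln_le0 : ln th <= 0 by rewrite ln_le0.
have : l%:R <= f.+1%:R * 2 :> R by rewrite -natrM ler_nat muln2.
nra.
Qed.

Section exponential_tail.
Context (R : realType) d (T : measurableType d) (P : probability T R).

Lemma cvg_probability_expR_tail (A : nat -> set T) (lam : R) :
  (forall l, measurable (A l)) -> 0 < lam ->
  (forall l, (P (~` A l) <= (expR (- (l%:R * lam)))%:E)%E) ->
  (fun l => P (A l)) @ \oo --> 1%E.
Proof.
move=> mA lam_gt0 tail; pose a l := fine (P (~` A l)).
have PA l : P (A l) = (1 - a l)%:E.
  rewrite -[A l]setCK probability_setC; last exact: measurableC.
  by rewrite EFinB fineK // fin_num_measure //; apply: measurableC.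
have a_bound l : 0 <= a l <= expR (- lam) ^+ l.
  rewrite fine_ge0 ?measure_ge0 //= -lee_fin /a fineK; last first.
    by rewrite fin_num_measure //; apply: measurableC.
  by rewrite -expRM_natl mulrN tail.
have a_cvg : a @ \oo --> 0.
  apply: (@squeeze_cvgr _ _ _ _ (fun=> 0) (fun l => expR (- lam) ^+ l)).
  - exact: filterE a_bound.
  - exact: cvg_cst.
  - by apply: cvg_expr; rewrite ger0_norm ?expR_ge0 // expR_lt1 oppr_lt0.
rewrite (_ : (fun l => P (A l)) = fun l => (1 - a l)%:E); last exact/funext.
apply: cvg_EFin; first exact: nearW.
by rewrite -[X in _ --> X]subr0; apply: cvgB => //; exact: cvg_cst.
Qed.

End exponential_tail.

Definition draws (j n : nat) : seq (nat * nat) := [seq (j, p) | p <- iota 0 n].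

Lemma draws_uniq j n : uniq (draws j n).
Proof. by rewrite map_inj_uniq ?iota_uniq // => p q []. Qed.

Section process.
Variables (R : realType) (E S : R) (Nobj k : nat) (ws0 : seq R).
Hypothesis E_gt0 : 0 < E.
Hypothesis S_gt0 : 0 < S.
Hypothesis Nobj_gt0 : (0 < Nobj)%N.
Hypothesis ws0_ge0 : all (fun w => 0 <= w) ws0.
Hypothesis ws0_sum : \sum_(w <- ws0) w = E.
Hypothesis S_ratio : S * Nobj%:R / (E + S) = k%:R.
Hypothesis Nvol_gt1 : (1 < Nvol E S Nobj)%N.
Implicit Types (u : nat -> nat -> R) (v : nat -> R).

Local Notation w_obj := (wobj E S Nobj).
Local Notation m := (Nobj - k)%N.
Local Notation K := (m.*2 + size ws0)%N.
Local Notation popu := (pop E S Nobj ws0).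
Local Notation fracw i := (frac (nth 0%R ws0 i / w_obj)).

Lemma wobj_gt0 : 0 < w_obj.
Proof. by rewrite divr_gt0 ?addr_gt0 ?ltr0n. Qed.

Let wobj_neq0 : w_obj != 0 := lt0r_neq0 wobj_gt0.

Lemma S_wobj : S / w_obj = k%:R.
Proof.
rewrite -S_ratio /wobj; have ES0 : E + S != 0 by rewrite gt_eqF ?addr_gt0.
by field; rewrite ES0 pnatr_eq0 -lt0n Nobj_gt0.
Qed.

Lemma Nvol_eq : Nvol E S Nobj = k.
Proof.
move: Nvol_gt1; rewrite /Nvol S_wobj natrK => Nvol_gt1'.
by apply/maxn_idPr; move: Nvol_gt1'; rewrite leq_max ltnn => /ltnW.
Qed.

Lemma lt_k_Nobj : (k < Nobj)%N.
Proof.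
have N0 : 0 < Nobj%:R :> R by rewrite ltr0n.
rewrite -(ltr_nat R) -S_ratio ltr_pdivrMr ?addr_gt0 //.
by rewrite mulrDr [S * _]mulrC ltrDr mulr_gt0.
Qed.

Lemma E_wobj : E / w_obj = m%:R.
Proof.
rewrite natrB ?(ltnW lt_k_Nobj) // -S_wobj /wobj.
have ES0 : E + S != 0 by rewrite gt_eqF ?addr_gt0.
by field; rewrite ES0 pnatr_eq0 -lt0n Nobj_gt0.
Qed.

Lemma m_gt0 : (0 < m)%N.
Proof. by rewrite subn_gt0 lt_k_Nobj. Qed.

Lemma le_m_K : (m <= K)%N.
Proof. by rewrite -addnn -addnA leq_addr. Qed.

Lemma K_gt1 : (1 < K)%N.
Proof. by have := m_gt0; rewrite -addnn; lia. Qed.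

Lemma Nvol_addn_eq n : (Nvol E S Nobj + n == Nobj) = (n == m).
Proof. by rewrite Nvol_eq; have := lt_k_Nobj => ?; apply/eqP/eqP; lia. Qed.

Lemma uniform_pop_ge0 n : all (fun w => 0 <= w) (uniform_pop E n).
Proof. by apply/allP => w /nseqP[-> _]; rewrite divr_ge0 // ltW. Qed.

Lemma sum_uniform_pop n : (0 < n)%N -> \sum_(w <- uniform_pop E n) w = E.
Proof.
move=> n_gt0; rewrite big_nseq iter_addr_0 -[_ *+ n]mulr_natr divfK //.
by rewrite pnatr_eq0 -lt0n.
Qed.

Lemma rr_count_uniform_bounded n v : (0 < n)%N -> (n <= K)%N ->
  (rr_count w_obj (uniform_pop E n) v <= K)%N.
Proof.
move=> n_gt0 le_nK; have [lt_mn|le_nm] := ltnP m n.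
  exact: leq_trans (rr_count_uniform_le E_wobj v lt_mn) le_nK.
apply: leq_trans (rr_count_le wobj_gt0 E_wobj (uniform_pop_ge0 n) (sum_uniform_pop n_gt0) v) _.
by rewrite size_nseq; lia.
Qed.

Lemma pop_bounded u l : exists2 n, (0 < n <= K)%N & popu u l.+1 = uniform_pop E n.
Proof.
have K_gt0 : (0 < K)%N := ltnW K_gt1.
elim: l => [|l [n /andP[n_gt0 le_nK] pop_l]]; rewrite pop_succ //.
  exists (maxn 1 (rr_count w_obj ws0 (u 0%N))) => //.
  rewrite leq_max geq_max K_gt0 /=.
  by apply: leq_trans (rr_count_le wobj_gt0 E_wobj ws0_ge0 ws0_sum _) _; lia.
exists (maxn 1 (rr_count w_obj (popu u l.+1) (u l.+1))) => //.
by rewrite leq_max geq_max K_gt0 pop_l rr_count_uniform_bounded.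
Qed.

Lemma pop_absorbed u j l : popu u j = uniform_pop E m -> (j <= l)%N ->
  (forall i p, (j <= i < l)%N -> (p < m)%N -> 0 <= u i p) ->
  popu u l = uniform_pop E m.
Proof.
move=> pop_j; elim: l => [|l IH]; first by rewrite leqn0 => /eqP <-.
rewrite leq_eqVlt => /orP[/eqP <- //|lt_jl] u_ge0.
rewrite pop_succ // IH // => [|i p /andP[le_ji lt_il]]; last first.
  by apply: u_ge0; rewrite le_ji ltnW.
rewrite (rr_count_uniform_stable m_gt0 E_wobj) ?(maxn_idPr m_gt0) // => p.
by apply: u_ge0; rewrite -ltnS lt_jl ltnSn.
Qed.

Lemma pop_first_hit u (c : bitseq) : size c = size ws0 ->
  (\sum_(i <- iota 0 (size ws0)) Num.truncn (nth 0%R ws0 i / w_obj) + count id c)%N = m ->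
  (forall i, (i < size ws0)%N -> if nth false c i
     then u 0%N i < fracw i else fracw i < u 0%N i) ->
  popu u 1 = uniform_pop E m.
Proof.
move=> c_size c_count u_sep.
by rewrite pop_succ // /= (rr_count_rounding c_size u_sep) c_count (maxn_idPr m_gt0).
Qed.

Definition reset_draws v : Prop :=
  (forall p, (p < m)%N -> 0 <= v p < K%:R^-1) /\
  (forall p, (m <= p < K)%N -> 1 - K%:R^-1 < v p).

Lemma rr_count_reset n v : (0 < n)%N -> (n <= K)%N -> reset_draws v ->
  (m <= rr_count w_obj (uniform_pop E n) v)%N.
Proof.
move=> n_gt0 le_nK [v_small v_large]; have [lt_nm|le_mn] := ltnP n m.
  apply: (rr_count_uniform_ge E_wobj n_gt0 le_nK) => p lt_pn.
  by have /andP[] := v_small p (ltn_trans lt_pn lt_nm).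
by rewrite (rr_count_uniform_eq m_gt0 E_wobj le_mn le_nK).
Qed.

Lemma pop_reset_hit u i : reset_draws (u i.+1) -> reset_draws (u i.+2) ->
  popu u i.+3 = uniform_pop E m.
Proof.
move=> reset1 [v_small v_large].
have [n /andP[n_gt0 le_nK] pop_i] := pop_bounded u i.
have [n' /andP[_ le_n'K] pop_i'] := pop_bounded u i.+1.
have le_mn' : (m <= n')%N.
  have := congr1 size pop_i'; rewrite pop_succ // pop_i !size_nseq => <-.
  by rewrite (leq_trans (rr_count_reset n_gt0 le_nK reset1)) ?leq_maxr.
by rewrite pop_succ // pop_i' (rr_count_uniform_eq m_gt0 E_wobj le_mn' le_n'K)
  ?(maxn_idPr m_gt0).
Qed.

Context d (T : measurableType d) (P : probability T R) (U : nat -> nat -> T -> R).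
Hypothesis mU : forall l p, measurable_fun setT (U l p).
Hypothesis U_unif : forall l p, uniform01 P (U l p).
Hypothesis U_indep : mutually_independent P (fun lp : nat * nat => U lp.1 lp.2).

Local Notation popU om := (popu (fun l p => U l p om)).

Section draw_events.
Variable c : bitseq.
Hypothesis c_size : size c = size ws0.
Hypothesis c_pos : forall i, nth false c i -> 0 < fracw i.
Hypothesis c_count :
  (\sum_(i <- iota 0 (size ws0)) Num.truncn (nth 0%R ws0 i / w_obj) + count id c)%N = m.

(* (j, p) is the draw of particle p at iteration j.  Iteration 0 realises the
   rounding c of the initial population; later iterations draw small values for
   the first m particles and large values for the others. *)
Definition draw_interval (jp : nat * nat) : set R :=
  if jp.1 == 0%N then
    if nth false c jp.2 then `]0, fracw jp.2[%classic else `]fracw jp.2, 1[%classic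
  else if (jp.2 < m)%N then `]0, K%:R^-1[%classic else `]1 - K%:R^-1, 1[%classic.

Local Notation box := (box (fun jp : nat * nat => U jp.1 jp.2) draw_interval).
Local Notation avoid := (avoid (fun jp : nat * nat => U jp.1 jp.2) draw_interval).

Definition reset_block i := draws i.*2.+1 K ++ draws i.*2.+2 K.

Definition blocks f := draws 0 (size ws0) :: [seq reset_block i | i <- iota 0 f].

Lemma box_draws j n om :
  box (draws j n) om -> forall p, (p < n)%N -> draw_interval (j, p) (U j p om).
Proof. by move=> box_om p lt_pn; apply: (box_om (j, p)); rewrite /= map_f // mem_iota. Qed.

Lemma first_block_hit om : box (draws 0 (size ws0)) om -> popU om 1 = uniform_pop E m.
Proof.
move=> /box_draws box_om; apply: pop_first_hit c_size c_count _ => //.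
move=> i /box_om; rewrite /draw_interval /=.
by case: (nth false c i); rewrite /= in_itv /= => /andP[].
Qed.

Lemma reset_draws_box j om : (0 < j)%N -> box (draws j K) om ->
  reset_draws (U j ^~ om).
Proof.
move=> j_gt0 /box_draws box_om; split => [p lt_pm|p /andP[le_mp lt_pK]].
  have := box_om p (leq_trans lt_pm le_m_K).
  by rewrite /draw_interval /= eqn0Ngt j_gt0 lt_pm /= in_itv /= => /andP[/ltW -> ->].
have := box_om p lt_pK; rewrite /draw_interval /= eqn0Ngt j_gt0 ltnNge le_mp /=.
by rewrite in_itv /= => /andP[].
Qed.

Lemma reset_block_hit i om : box (reset_block i) om -> popU om i.*2.+3 = uniform_pop E m.
Proof.
rewrite box_cat => -[box1 box2].
by apply: pop_reset_hit => //; apply: reset_draws_box.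
Qed.

(* Leaving the absorbing state needs a negative draw, which splits a particle of
   weight ratio 1 in two. *)
Definition negative_draw : set T := \bigcup_j \bigcup_p [set om | U j p om < 0].

Lemma measurable_lt0 j p : measurable [set om | U j p om < 0].
Proof.
rewrite (_ : [set om | U j p om < 0] = U j p @^-1` `]-oo, 0[%classic); last first.
  by apply/seteqP; split => om /=; rewrite in_itv.
by rewrite -[_ @^-1` _]setTI; apply: mU => //; apply: measurable_itv.
Qed.

Lemma measurable_negative_draw : measurable negative_draw.
Proof.
by apply: bigcupT_measurable => j; apply: bigcupT_measurable => p; apply: measurable_lt0.
Qed.

Lemma negative_draw_null : P negative_draw = 0%E.
Proof.
apply/negligibleP; first exact: measurable_negative_draw.
apply: negligible_bigcup => j; apply: negligible_bigcup => p.
by apply/negligibleP; [apply: measurable_lt0 | apply: uniform01_lt0].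
Qed.

Lemma failure_sub l : (0 < l)%N ->
  [set om | Ntot E S Nobj ws0 U l om <> Nobj] `<=`
  negative_draw `|` avoid (blocks (l.-1)./2).
Proof.
move=> l_gt0 om fail; have [neg|nonneg] := pselect (negative_draw om); [by left|right].
have U_ge0 j p : 0 <= U j p om.
  by rewrite leNgt; apply/negP => U_lt0; apply: nonneg; exists j => //; exists p.
have no_hit j : (j <= l)%N -> popU om j <> uniform_pop E m.
  move=> le_jl hit; apply: fail; apply/eqP.
  by rewrite /Ntot Nvol_addn_eq (pop_absorbed hit le_jl) ?size_uniform_pop.
move=> t /=; rewrite in_cons.
case/orP => [/eqP -> /first_block_hit|/mapP[i i_in ->] /reset_block_hit].
  exact: no_hit.
apply: no_hit; move: i_in; rewrite mem_iota add0n.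
have := odd_double_half l.-1; case: (odd l.-1) => /=; lia.
Qed.

Lemma measurable_draw_interval jp : measurable (draw_interval jp).
Proof. by rewrite /draw_interval; do 2 case: ifP => _; apply: measurable_itv. Qed.

Lemma measurable_draw jp : measurable_fun setT (U jp.1 jp.2).
Proof. exact: mU. Qed.

Lemma fine_probability_draws j : (0 < j)%N ->
  fine (P (box (draws j K))) = K%:R^-1 ^+ K.
Proof.
move=> j_gt0; have K_gt0 : 0 < K%:R :> R by rewrite ltr0n ltnW // K_gt1.
have Kinv_le1 : K%:R^-1 <= 1 :> R by rewrite invf_le1 // ler1n ltnW // K_gt1.
rewrite (fine_probability_box measurable_draw measurable_draw_interval U_indep) ?draws_uniq //.
rewrite big_map (eq_bigr (fun=> K%:R^-1)) => [|p _].
  by rewrite big_const_seq count_predT size_iota iter_mulr_1.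
rewrite /draw_interval /= eqn0Ngt j_gt0 /=.
have Kinv_gt0 : 0 < K%:R^-1 :> R by rewrite invr_gt0.
by case: ifP => _; rewrite uniform01_itv //=; lra.
Qed.

Lemma first_block_gt0 : 0 < fine (P (box (draws 0 (size ws0)))).
Proof.
rewrite (fine_probability_box measurable_draw measurable_draw_interval U_indep) ?draws_uniq //.
rewrite big_map big_seq; apply: prodr_gt0 => i; rewrite mem_iota => /andP[_ lt_i].
have r_ge0 := ratio_ge0 wobj_gt0 i ws0_ge0.
rewrite /draw_interval /=; case: ifP => [/c_pos frac_gt0|_].
  by rewrite uniform01_itv ?lexx ?ltW ?frac_lt1 //= subr0.
by rewrite uniform01_itv ?frac_ge0 ?frac_lt1 //= subr_gt0 frac_lt1.
Qed.

Lemma flatten_reset_blocks a f : flatten [seq reset_block i | i <- iota a f] =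
  [seq (j, p) | j <- iota a.*2.+1 f.*2, p <- iota 0 K].
Proof. by elim: f a => [|f IH] a //=; rewrite IH /reset_block -catA doubleS. Qed.

Lemma blocks_uniq f : uniq (flatten (blocks f)).
Proof.
rewrite /= flatten_reset_blocks cat_uniq draws_uniq allpairs_uniq ?iota_uniq //=; last first.
  by move=> [j p] [j' p'] _ _ [-> ->].
rewrite andbT; apply/hasPn => _ /allpairsP[[j p] [+ _ ->]].
rewrite mem_iota => /andP[j_gt0 _].
by apply/mapP => -[p' _ [j0 _]]; rewrite j0 in j_gt0.
Qed.

Lemma measurable_failure l : measurable [set om | Ntot E S Nobj ws0 U l om <> Nobj].
Proof.
by apply: measurableC; apply: measurable_Ntot_eq.
Qed.

Lemma fine_probability_reset_block i :
  fine (P (box (reset_block i))) = (K%:R^-1 ^+ K) ^+ 2.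
Proof.
rewrite (fine_probability_box_cat measurable_draw measurable_draw_interval U_indep).
  by rewrite !fine_probability_draws // expr2.
rewrite cat_uniq !draws_uniq andbT /=; apply/hasPn => _ /mapP[p _ ->].
by apply/mapP => -[p' _ []]; lia.
Qed.

Lemma probability_failure l : (0 < l)%N ->
  (P [set om | Ntot E S Nobj ws0 U l om <> Nobj] <=
   ((1 - fine (P (box (draws 0 (size ws0))))) *
    (1 - (K%:R^-1 ^+ K) ^+ 2) ^+ (l.-1)./2)%:E)%E.
Proof.
move=> l_gt0; have mA : measurable (avoid (blocks (l.-1)./2)).
  exact: measurable_avoid measurable_draw measurable_draw_interval _.
have mF := measurable_failure l.
have mN := measurable_negative_draw.
apply: le_trans (le_measure P _ _ (failure_sub l_gt0)) _; rewrite ?inE //.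
  exact: measurableU.
apply: le_trans (measureU2 P mN mA) _.
rewrite [X in (X + _ <= _)%E](_ : _ = 0%E) ?add0e; last exact: negative_draw_null.
rewrite -[X in (X <= _)%E]fineK ?fin_num_measure // lee_fin.
have := fine_probability_box_avoid measurable_draw measurable_draw_interval U_indep
  (s := [::]) (blocks_uniq (l.-1)./2).
rewrite box_nil setTI => ->; rewrite probability_setT mul1r big_cons big_map.
rewrite (eq_bigr (fun=> 1 - (K%:R^-1 ^+ K) ^+ 2)) => [|i _]; last first.
  by rewrite fine_probability_reset_block.
by rewrite big_const_seq count_predT size_iota iter_mulr_1.
Qed.

Lemma probability_failure_geometric : exists2 th : R, 0 < th < 1 & forall l, (0 < l)%N ->
  (P [set om | Ntot E S Nobj ws0 U l om <> Nobj] <= (th ^+ ((l.-1)./2).+1)%:E)%E.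
Proof.
set p1 := fine (P (box (draws 0 (size ws0)))); pose q : R := K%:R^-1 ^+ K.
have p1_gt0 : 0 < p1 := first_block_gt0.
have p1_le1 : p1 <= 1.
  rewrite -lee_fin fineK ?probability_le1 ?fin_num_measure //;
  exact: measurable_box measurable_draw measurable_draw_interval _.
have [q_gt0 q_lt1] : 0 < q /\ q < 1.
  have K_gt0 : (0 < K)%N := ltnW K_gt1.
  have Kinv_lt1 : K%:R^-1 < 1 :> R by rewrite invf_lt1 ?ltr0n // ltr1n K_gt1.
  split; first by rewrite exprn_gt0 // invr_gt0 ltr0n.
  by rewrite exprn_ilt1 ?invr_ge0 ?ler0n // -lt0n.
have q2_gt0 : 0 < q ^+ 2 by rewrite exprn_gt0.
have q2_lt1 : q ^+ 2 < 1 by rewrite expr2; nra.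
have th_gt0 : 0 < 1 - p1 * q ^+ 2 by rewrite subr_gt0; nra.
exists (1 - p1 * q ^+ 2); first by rewrite th_gt0 gtrBl mulr_gt0.
move=> l l_gt0; apply: le_trans (probability_failure l_gt0) _; rewrite lee_fin -/p1 -/q.
have le_p1 : 1 - p1 <= 1 - p1 * q ^+ 2 by rewrite lerD2l lerN2 ler_piMr // ltW.
have le_q2 : 1 - q ^+ 2 <= 1 - p1 * q ^+ 2 by rewrite lerD2l lerN2 ler_piMl // ltW.
rewrite [X in _ <= X]exprS; apply: ler_pM => //; first by rewrite subr_ge0.
  by rewrite exprn_ge0 // subr_ge0 ltW.
by apply: lerXn2r; rewrite // nnegrE ltW // subr_gt0.
Qed.

End draw_events.

Lemma probability_failure_expR : exists2 lam : R, 0 < lam & forall l,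
  (P [set om | Ntot E S Nobj ws0 U l om <> Nobj] <= (expR (- (l%:R * lam)))%:E)%E.
Proof.
have [c [c_size c_pos c_count]] := exists_rounding wobj_gt0 E_wobj ws0_ge0 ws0_sum.
have [th /andP[th_gt0 th_lt1] failure_le] :=
  probability_failure_geometric c_size c_pos c_count.
exists (- ln th / 2); first by rewrite divr_gt0 // oppr_gt0 ln_lt0 // th_gt0 th_lt1.
case=> [|l]; first by rewrite mul0r oppr0 expR0 probability_le1 //; apply: measurable_failure.
apply: le_trans (failure_le _ (ltn0Sn l)) _; rewrite lee_fin.
apply: geometric_le_expR => //; first exact: ltW.
by have := odd_double_half l; rewrite /= -!addnn; case: (odd l) => /=; lia.
Qed.

End process.

Theorem proposition3 (R : realType) (d : measure_display) (T : measurableType d)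
  (P : probability T R) (U : nat -> nat -> T -> R)
  (E S : R) (Nobj : nat) (ws0 : seq R) :
  0 < E -> 0 < S -> (0 < Nobj)%N ->
  all (fun w => 0 < w) ws0 -> \sum_(w <- ws0) w = E ->
  (exists k : nat, S * Nobj%:R / (E + S) = k%:R) ->
  (1 < Nvol E S Nobj)%N ->
  (forall l p, measurable_fun setT (U l p)) ->
  (forall l p, uniform01 P (U l p)) ->
  mutually_independent P (fun lp : nat * nat => U lp.1 lp.2) ->
  (fun l => P [set om | Ntot E S Nobj ws0 U l om = Nobj]) @ \oo --> 1%E /\
  exists lam : R, 0 < lam /\
    forall l : nat,
      (P [set om | Ntot E S Nobj ws0 U l om <> Nobj]
        <= (expR (- (l%:R * lam)))%:E)%E.
Proof.
move=> E_gt0 S_gt0 Nobj_gt0 ws0_gt0 ws0_sum [k S_ratio] Nvol_gt1 mU U_unif U_indep.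
have ws0_ge0 : all (fun w => 0 <= w) ws0 by apply: sub_all ws0_gt0 => w /ltW.
have [lam lam_gt0 failure_le] := probability_failure_expR E_gt0 S_gt0 Nobj_gt0
  ws0_ge0 ws0_sum S_ratio Nvol_gt1 mU U_unif U_indep.
split; last by exists lam.
apply: (cvg_probability_expR_tail _ lam_gt0 failure_le) => l.
by apply: measurable_Ntot_eq => //; apply/lt0r_neq0/wobj_gt0.
Qed.
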